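(* Let $d=1$, $I=[a,b]$ with $a<b$, and let $\sigma$ be as in the context with $\sigma(1)<1$ and the exponent $\alpha$ of condition $(\Sigma3)$ satisfying $\alpha>2$. Let $f\in C([a,b])$. Then $$\|K_n(f,\cdot)-f(\cdot)\|_\infty=o(n^{-1}),\qquad n\to+\infty,$$ if and only if $f$ is constant on $[a,b]$.
   Context: $\sigma:\mathbb R\to\mathbb R$ is a non-decreasing sigmoidal function ($\lim_{x\to-\infty}\sigma(x)=0$, $\lim_{x\to+\infty}\sigma(x)=1$) satisfying: $(\Sigma1)$ $\sigma(x)-1/2$ is odd; $(\Sigma2)$ $\sigma\in C^2(\mathbb R)$ and concave on $[0,+\infty)$; $(\Sigma3)$ $\sigma(x)=\mathcal O(|x|^{-1-\alpha})$ as $x\to-\infty$ for some $\alpha>0$. $\phi_\sigma(x):=\frac12[\sigma(x+1)-\sigma(x-1)]$. With $\mathcal K_n:=\{k\in\mathbb Z:\lceil na\rceil\le k\le\lfloor nb\rfloor-1\}$, for $n\in\mathbb N^+$ and $x\in[a,b]$, $$K_n(f,x):=\frac{\sum_{k\in\mathcal K_n}\big[n\int_{k/n}^{(k+1)/n}f(u)du\big]\phi_\sigma(nx-k)}{\sum_{k\in\mathcal K_n}\phi_\sigma(nx-k)},$$ and $\|\cdot\|_\infty$ is the sup-norm on $[a,b]$. *)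

From Stdlib Require Import Reals Lra Lia ZArith List.
From Coquelicot Require Import Coquelicot.
Open Scope R_scope.

(* floor and ceiling on R (up x is the least integer > x) *)
Definition Rfloor (x : R) : Z := (up x - 1)%Z.
Definition Rceil (x : R) : Z := (- Rfloor (- x))%Z.

Definition sigmoidal (s : R -> R) : Prop :=
  (forall x y, x <= y -> s x <= s y) /\
  is_lim s m_infty 0 /\ is_lim s p_infty 1.

Definition Sigma1 (s : R -> R) : Prop :=
  forall x, s (- x) - / 2 = - (s x - / 2).

Definition Sigma2 (s : R -> R) : Prop :=
  (forall x, ex_derive s x) /\
  (forall x, ex_derive (Derive s) x) /\
  (forall x, continuous (Derive_n s 2) x) /\
  (forall x y t, 0 <= x -> 0 <= y -> 0 <= t <= 1 ->
     t * s x + (1 - t) * s y <= s (t * x + (1 - t) * y)).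

Definition Sigma3_with (s : R -> R) (alpha : R) : Prop :=
  exists C X, 0 < X /\
    forall x, x <= - X -> Rabs (s x) <= C * Rpower (Rabs x) (- 1 - alpha).

Definition phi_sigma (s : R -> R) (x : R) : R := (s (x + 1) - s (x - 1)) / 2.

Definition Kset (a b : R) (n : nat) : list Z :=
  map (fun i => (Rceil (INR n * a) + Z.of_nat i)%Z)
      (seq 0 (Z.to_nat (Rfloor (INR n * b) - Rceil (INR n * a)))).

Definition sumZ (l : list Z) (g : Z -> R) : R :=
  fold_right (fun k acc => g k + acc) 0 l.

Definition Kant (s : R -> R) (a b : R) (n : nat) (f : R -> R) (x : R) : R :=
  sumZ (Kset a b n)
    (fun k => (INR n * RInt f (IZR k / INR n) ((IZR k + 1) / INR n))
              * phi_sigma s (INR n * x - IZR k))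
  / sumZ (Kset a b n) (fun k => phi_sigma s (INR n * x - IZR k)).

Definition continuous_on_ab (f : R -> R) (a b : R) : Prop :=
  forall x, a <= x <= b -> forall eps, 0 < eps -> exists delta, 0 < delta /\
    forall y, a <= y <= b -> Rabs (y - x) < delta -> Rabs (f y - f x) < eps.

From Stdlib Require Import Reals Lra Lia ZArith List.
From Coquelicot Require Import Coquelicot.
Open Scope R_scope.

(* Write K_n(f, x) = N(n x) / D(n x), where N and D sum phi_sigma(u - k) over the cells k,
   weighted by the cell means of f, resp. by 1. Since phi_sigma(v) = psi(v + 1) - psi(v) for
   psi = sigma_avg sigma, i.e. psi(v) = (sigma(v) + sigma(v - 1)) / 2, the denominator
   telescopes: D differs from 1 by two tails of sigma, summable because sigma(x) = O(x^-2)
   at -oo, and K_n reproduces constants.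
   Conversely, the sum of N over the nodes P + l + th (0 <= l < Q - P, with P ~ n x and
   Q ~ n y) telescopes in l into the sum of the cell means plus boundary terms at P and Q,
   which tend to th f(x) and th f(y) for th = 0 and th = 1/2. If ||K_n f - f|| = o(1/n), the
   Riemann sum of f over these nodes is thus o(1)-close to the sum of the cell means plus
   th (f(y) - f(x)). The cells of K_{2n} halve those of K_n, so the case th = 0 at 2n is the
   sum of the cases th = 0 and th = 1/2 at n, which forces f(y) = f(x). *)

Fixpoint sum_lt (g : nat -> R) (M : nat) : R :=
  match M with O => 0 | S M' => sum_lt g M' + g M' end.

Lemma sum_lt_ext (g h : nat -> R) M :
  (forall i, (i < M)%nat -> g i = h i) -> sum_lt g M = sum_lt h M.
Proof.
  induction M as [|M IH]; intros Hgh; simpl; [easy|].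
  rewrite IH by (intros; apply Hgh; lia). now rewrite Hgh by lia.
Qed.

Lemma sum_lt_S_l (g : nat -> R) M :
  sum_lt g (S M) = g O + sum_lt (fun i => g (S i)) M.
Proof. induction M as [|M IH]; simpl in *; [lra|]. rewrite IH. lra. Qed.

Lemma sum_lt_split (g : nat -> R) M1 M2 :
  sum_lt g (M1 + M2) = sum_lt g M1 + sum_lt (fun i => g (M1 + i)%nat) M2.
Proof.
  induction M2 as [|M2 IH]; simpl; [rewrite Nat.add_0_r; lra|].
  rewrite Nat.add_succ_r. simpl. rewrite IH. lra.
Qed.

Lemma sum_lt_plus (g h : nat -> R) M :
  sum_lt (fun i => g i + h i) M = sum_lt g M + sum_lt h M.
Proof. induction M; simpl; lra. Qed.

Lemma sum_lt_minus (g h : nat -> R) M :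
  sum_lt (fun i => g i - h i) M = sum_lt g M - sum_lt h M.
Proof. induction M; simpl; lra. Qed.

Lemma sum_lt_opp (g : nat -> R) M : sum_lt (fun i => - g i) M = - sum_lt g M.
Proof. induction M; simpl; lra. Qed.

Lemma sum_lt_scal (c : R) (g : nat -> R) M :
  sum_lt (fun i => c * g i) M = c * sum_lt g M.
Proof. induction M; simpl; lra. Qed.

Lemma sum_lt_center (g w : nat -> R) c M :
  sum_lt (fun m => g m * w m) M = sum_lt (fun m => (g m - c) * w m) M + c * sum_lt w M.
Proof. induction M; simpl; lra. Qed.

Lemma sum_lt_const (c : R) M : sum_lt (fun _ => c) M = INR M * c.
Proof. induction M as [|M IH]; simpl; [lra|]. rewrite IH. destruct M; simpl; lra. Qed.

Lemma sum_lt_le (g h : nat -> R) M :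
  (forall i, (i < M)%nat -> g i <= h i) -> sum_lt g M <= sum_lt h M.
Proof.
  induction M as [|M IH]; simpl; intros Hgh; [lra|].
  assert (sum_lt g M <= sum_lt h M) by (apply IH; intros; apply Hgh; lia).
  assert (g M <= h M) by (apply Hgh; lia). lra.
Qed.

Lemma sum_lt_nonneg (g : nat -> R) M :
  (forall i, (i < M)%nat -> 0 <= g i) -> 0 <= sum_lt g M.
Proof.
  intros Hg. rewrite <- (Rmult_0_r (INR M)), <- sum_lt_const. now apply sum_lt_le.
Qed.

Lemma sum_lt_abs (g : nat -> R) M :
  Rabs (sum_lt g M) <= sum_lt (fun i => Rabs (g i)) M.
Proof.
  induction M; simpl; [rewrite Rabs_R0; lra|].
  eapply Rle_trans; [apply Rabs_triang | lra].
Qed.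

Lemma sum_lt_rev (g : nat -> R) M :
  sum_lt g M = sum_lt (fun m => g (M - 1 - m)%nat) M.
Proof.
  induction M as [|M IH]; [reflexivity|].
  rewrite (sum_lt_S_l (fun m => g (S M - 1 - m)%nat)). simpl sum_lt at 1.
  rewrite IH, Rplus_comm. replace (S M - 1 - 0)%nat with M by lia.
  f_equal. apply sum_lt_ext. intros i _. f_equal. lia.
Qed.

Lemma sum_lt_swap (g : nat -> nat -> R) M1 M2 :
  sum_lt (fun i => sum_lt (fun j => g i j) M2) M1 =
  sum_lt (fun j => sum_lt (fun i => g i j) M1) M2.
Proof.
  induction M1 as [|M1 IH]; simpl.
  - rewrite sum_lt_const. ring.
  - rewrite IH, <- sum_lt_plus. reflexivity.
Qed.

Lemma sum_lt_pairs (g : nat -> R) M :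
  sum_lt g (2 * M) = sum_lt (fun l => g (2 * l)%nat + g (2 * l + 1)%nat) M.
Proof.
  induction M as [|M IH]; [reflexivity|].
  replace (2 * S M)%nat with (S (S (2 * M))) by lia.
  cbn [sum_lt]. rewrite IH.
  replace (S (2 * M)) with (2 * M + 1)%nat by lia. lra.
Qed.

Lemma sum_lt_telescope (F : nat -> R) M :
  sum_lt (fun i => F (S i) - F i) M = F M - F O.
Proof. induction M as [|M IH]; simpl; [lra|]. rewrite IH. lra. Qed.

Lemma sumZ_map_seq (h : nat -> Z) (g : Z -> R) s L :
  sumZ (map h (seq s L)) g = sum_lt (fun i => g (h (s + i)%nat)) L.
Proof.
  revert s. induction L as [|L IH]; intros s; [reflexivity|].
  rewrite sum_lt_S_l. unfold sumZ in *. simpl. rewrite IH, Nat.add_0_r.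
  f_equal. apply sum_lt_ext. intros. do 2 f_equal. lia.
Qed.

Lemma IZR_Z_to_nat (k : Z) : (0 <= k)%Z -> INR (Z.to_nat k) = IZR k.
Proof. intros Hk. now rewrite INR_IZR_INZ, Z2Nat.id. Qed.

Lemma eventually_INR_ge r : eventually (fun n => r <= INR n).
Proof.
  destruct (archimed r) as [Hr _]. exists (Z.to_nat (up r)). intros n Hn.
  apply le_INR in Hn. destruct (Z_le_gt_dec 0 (up r)).
  - rewrite IZR_Z_to_nat in Hn by lia. lra.
  - pose proof (IZR_lt _ _ (Z.gt_lt _ _ g)). pose proof (pos_INR n). lra.
Qed.

Lemma eventually_mul_ge c r : 0 < r -> eventually (fun n => c <= INR n * r).
Proof.
  intros Hr. refine (filter_imp _ _ _ (eventually_INR_ge (c / r))). intros n Hn.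
  apply Rmult_le_reg_r with (/ r); [now apply Rinv_0_lt_compat|].
  replace (INR n * r * / r) with (INR n) by (field; lra). exact Hn.
Qed.

Lemma eventually_double (P : nat -> Prop) :
  eventually P -> eventually (fun n => P (2 * n)%nat).
Proof. intros [N HN]. exists N. intros n Hn. apply HN. lia. Qed.

Lemma Rfloor_spec z : IZR (Rfloor z) <= z < IZR (Rfloor z) + 1.
Proof. unfold Rfloor. rewrite minus_IZR. destruct (archimed z). simpl. lra. Qed.

Lemma Rceil_spec z : z <= IZR (Rceil z) < z + 1.
Proof. unfold Rceil. rewrite opp_IZR. destruct (Rfloor_spec (- z)). lra. Qed.

Definition kmin (a : R) (n : nat) : Z := Rceil (INR n * a).
Definition kmax (b : R) (n : nat) : Z := Rfloor (INR n * b).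
Definition ncells (a b : R) (n : nat) : nat := Z.to_nat (kmax b n - kmin a n).
Definition knode (a : R) (n i : nat) : Z := (kmin a n + Z.of_nat i)%Z.

Lemma knode_bounds a b n i : (i < ncells a b n)%nat ->
  (kmin a n <= knode a n i)%Z /\ (knode a n i + 1 <= kmax b n)%Z.
Proof. unfold knode, ncells. lia. Qed.

Lemma kmax_sub_kmin a b n : INR n * (b - a) - 2 < IZR (kmax b n) - IZR (kmin a n).
Proof.
  unfold kmin, kmax. destruct (Rceil_spec (INR n * a)), (Rfloor_spec (INR n * b)). nra.
Qed.

Lemma cell_in a b n k : 0 < INR n -> (kmin a n <= k)%Z -> (k + 1 <= kmax b n)%Z ->
  a <= IZR k / INR n /\ (IZR k + 1) / INR n <= b.
Proof.
  intros Hn Hk1 Hk2. unfold kmin, kmax in *.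
  destruct (Rceil_spec (INR n * a)), (Rfloor_spec (INR n * b)).
  apply IZR_le in Hk1. apply IZR_le in Hk2. rewrite plus_IZR in Hk2.
  split; apply Rmult_le_reg_l with (INR n); auto; field_simplify; lra.
Qed.

Lemma kmin_add_le a n x P m : INR m + 3 <= INR n * (x - a) -> INR n * x - 2 <= IZR P ->
  (kmin a n + Z.of_nat m <= P)%Z.
Proof.
  intros Hx HP. pose proof (Rceil_spec (INR n * a)). unfold kmin.
  apply le_IZR. rewrite plus_IZR, <- INR_IZR_INZ. lra.
Qed.

Lemma add_lt_kmax b n y Q m : INR m + 3 <= INR n * (b - y) -> IZR Q <= INR n * y + 2 ->
  (Q + Z.of_nat m < kmax b n)%Z.
Proof.
  intros Hy HQ. pose proof (Rfloor_spec (INR n * b)). unfold kmax.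
  apply lt_IZR. rewrite plus_IZR, <- INR_IZR_INZ. lra.
Qed.

Definition cell_mean (f : R -> R) (n : nat) (k : Z) : R :=
  INR n * RInt f (IZR k / INR n) ((IZR k + 1) / INR n).

Lemma cell_mean_const f n k c : 0 < INR n ->
  (forall t, IZR k / INR n <= t <= (IZR k + 1) / INR n -> f t = c) -> cell_mean f n k = c.
Proof.
  intros Hn Hf. unfold cell_mean.
  assert (IZR k / INR n <= (IZR k + 1) / INR n).
  { apply Rmult_le_reg_l with (INR n); auto. field_simplify; lra. }
  rewrite (RInt_ext _ (fun _ => c)).
  - rewrite RInt_const. change (scal ?x ?y) with (x * y). field. lra.
  - intros t Ht. rewrite Rmin_left, Rmax_right in Ht by lra. apply Hf. lra.
Qed.

Lemma sample_sum_double f n P J : 0 < INR n ->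
  sum_lt (fun l => f ((IZR (2 * P) + INR l + 0) / INR (2 * n))) (2 * J) =
  sum_lt (fun l => f ((IZR P + INR l + 0) / INR n)) J
  + sum_lt (fun l => f ((IZR P + INR l + / 2) / INR n)) J.
Proof.
  intros Hn. rewrite sum_lt_pairs, <- sum_lt_plus. apply sum_lt_ext. intros l _.
  rewrite mult_INR, mult_IZR, plus_INR, !mult_INR. simpl (INR 2). simpl (INR 1).
  f_equal; f_equal; field; lra.
Qed.

Definition Kant_num (s : R -> R) (a b : R) (n : nat) (f : R -> R) (u : R) : R :=
  sum_lt (fun i => cell_mean f n (knode a n i) * phi_sigma s (u - IZR (knode a n i)))
    (ncells a b n).

Definition Kant_den (s : R -> R) (a b : R) (n : nat) (u : R) : R :=
  sum_lt (fun i => phi_sigma s (u - IZR (knode a n i))) (ncells a b n).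

Definition Kant_err_le (s : R -> R) (a b : R) (f : R -> R) (n : nat) (d : R) : Prop :=
  forall x, a <= x <= b -> Rabs (Kant s a b n f x - f x) <= d.

Lemma Kant_eq s a b n f x :
  Kant s a b n f x = Kant_num s a b n f (INR n * x) / Kant_den s a b n (INR n * x).
Proof. unfold Kant, Kset, Kant_num, Kant_den. now rewrite !sumZ_map_seq. Qed.

Lemma IZR_knode a n i : IZR (knode a n i) = IZR (kmin a n) + INR i.
Proof. unfold knode. now rewrite plus_IZR, INR_IZR_INZ. Qed.

Definition sigma_avg (s : R -> R) (v : R) : R := (s v + s (v - 1)) / 2.

Lemma phi_sigma_avg s v : phi_sigma s v = sigma_avg s (v + 1) - sigma_avg s v.
Proof. unfold phi_sigma, sigma_avg. replace (v + 1 - 1) with v by ring. field. Qed.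

Lemma Kant_den_telescope s a b n u : (kmin a n <= kmax b n)%Z ->
  Kant_den s a b n u =
  sigma_avg s (u - IZR (kmin a n) + 1) - sigma_avg s (u - IZR (kmax b n) + 1).
Proof.
  intros Hk. unfold Kant_den.
  set (F j := - sigma_avg s (u - IZR (kmin a n) - INR j + 1)).
  rewrite (sum_lt_ext _ (fun i => F (S i) - F i)).
  - rewrite sum_lt_telescope. unfold F, ncells.
    rewrite IZR_Z_to_nat, minus_IZR by lia. simpl INR.
    replace (u - IZR (kmin a n) - 0 + 1) with (u - IZR (kmin a n) + 1) by ring.
    replace (u - IZR (kmin a n) - (IZR (kmax b n) - IZR (kmin a n)) + 1)
      with (u - IZR (kmax b n) + 1) by ring. ring.
  - intros i _. unfold F. rewrite phi_sigma_avg, IZR_knode, S_INR.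
    replace (u - (IZR (kmin a n) + INR i) + 1) with (u - IZR (kmin a n) - INR i + 1) by ring.
    replace (u - IZR (kmin a n) - (INR i + 1) + 1) with (u - (IZR (kmin a n) + INR i)) by ring.
    ring.
Qed.

Lemma Rabs_sub_of_ratio (N D v d B : R) : 0 < D -> Rabs v <= B ->
  Rabs (N / D - v) <= d -> d <= 1 -> Rabs (N - v) <= d + (B + 1) * Rabs (1 - D).
Proof.
  intros HD Hv Hd Hd1.
  assert (Hratio : Rabs (N / D) <= B + 1).
  { pose proof (Rabs_triang_inv (N / D) v). lra. }
  replace (N - v) with ((N / D - v) + N / D * (D - 1)) by (field; lra).
  eapply Rle_trans; [apply Rabs_triang|]. apply Rplus_le_compat; [easy|].
  rewrite Rabs_mult, Rabs_minus_sym.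
  apply Rmult_le_compat_r; [apply Rabs_pos|easy].
Qed.

(* What is left at the node P when sum_l N(P + l + th) is telescoped in l. *)
Definition boundary_term (s : R -> R) (a b : R) (n : nat) (f : R -> R) (th : R) (P : Z) : R :=
  sum_lt (fun i => cell_mean f n (knode a n i) * sigma_avg s (IZR P + th - IZR (knode a n i)))
    (ncells a b n)
  - sum_lt (fun i => cell_mean f n (knode a n i)) (Z.to_nat (P - kmin a n)).

Lemma Kant_num_node_sum s a b n f th P Q : (kmin a n <= P)%Z -> (P <= Q)%Z ->
  sum_lt (fun l => Kant_num s a b n f (IZR P + INR l + th)) (Z.to_nat (Q - P)) =
  boundary_term s a b n f th Q - boundary_term s a b n f th P
  + sum_lt (fun l => cell_mean f n (P + Z.of_nat l)) (Z.to_nat (Q - P)).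
Proof.
  intros HP HPQ. unfold Kant_num, boundary_term. rewrite sum_lt_swap.
  replace (Z.to_nat (Q - kmin a n)) with (Z.to_nat (P - kmin a n) + Z.to_nat (Q - P))%nat
    by lia.
  rewrite sum_lt_split.
  rewrite (sum_lt_ext (fun i => cell_mean f n (knode a n (_ + i)))
             (fun l => cell_mean f n (P + Z.of_nat l))) by (intros; unfold knode; f_equal; lia).
  enough (Hcol : forall i, sum_lt (fun l => cell_mean f n (knode a n i) *
      phi_sigma s (IZR P + INR l + th - IZR (knode a n i))) (Z.to_nat (Q - P)) =
      cell_mean f n (knode a n i) * sigma_avg s (IZR Q + th - IZR (knode a n i)) -
      cell_mean f n (knode a n i) * sigma_avg s (IZR P + th - IZR (knode a n i))).
  { rewrite (sum_lt_ext _ _ _ (fun i _ => Hcol i)), sum_lt_minus. ring. }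
  intros i. rewrite sum_lt_scal, <- Rmult_minus_distr_l. f_equal.
  set (F l := sigma_avg s (IZR P + INR l + th - IZR (knode a n i))).
  rewrite (sum_lt_ext _ (fun l => F (S l) - F l)).
  - rewrite sum_lt_telescope. unfold F. rewrite IZR_Z_to_nat, minus_IZR by lia.
    simpl INR. f_equal; f_equal; ring.
  - intros l _. unfold F. rewrite phi_sigma_avg, S_INR. f_equal; f_equal; ring.
Qed.

Definition tail_weight (s : R -> R) (m : nat) : R := s (1 - INR m).

Definition tail_bound (C : R) (p : nat) : R := C / (INR p - 2).

Lemma tail_bound_antimono C p q : 0 <= C -> (3 <= p)%nat -> (p <= q)%nat ->
  tail_bound C q <= tail_bound C p.
Proof.
  intros HC Hp Hpq. apply le_INR in Hp, Hpq. simpl in Hp. unfold tail_bound, Rdiv.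
  apply Rmult_le_compat_l; [lra|]. apply Rinv_le_contravar; lra.
Qed.

Lemma tail_bound_small K C tau : 0 <= K -> 0 < C -> 0 < tau ->
  exists M : nat, (3 <= M)%nat /\ K * tail_bound C M <= tau.
Proof.
  intros HK HC Htau.
  destruct (eventually_INR_ge (K * C / tau + 3)) as [N HN].
  exists (N + 3)%nat. split; [lia|].
  specialize (HN (N + 3)%nat ltac:(lia)).
  assert (0 <= K * C / tau) by (apply Rdiv_le_0_compat; nra).
  unfold tail_bound. rewrite plus_INR in *. simpl (INR 3) in *.
  apply Rmult_le_reg_r with (INR N + (1 + 1 + 1) - 2); [lra|].
  replace (K * (C / (INR N + (1 + 1 + 1) - 2)) * (INR N + (1 + 1 + 1) - 2)) with (K * C)
    by (field; lra).
  apply Rmult_le_reg_r with (/ tau); [apply Rinv_0_lt_compat; lra|].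
  replace (tau * (INR N + (1 + 1 + 1) - 2) * / tau) with (INR N + 1) by (field; lra).
  unfold Rdiv in *. lra.
Qed.

Lemma Sigma3_quadratic_decay s alpha : (forall x, s x <= 1) -> 1 <= alpha ->
  Sigma3_with s alpha -> exists C, 0 < C /\ forall x, x <= -1 -> s x <= C / (x * x).
Proof.
  intros Hle1 Halpha [C0 [X [HX HC0]]].
  pose proof (Rmax_l X 1). pose proof (Rmax_r X 1). set (M := Rmax X 1) in *.
  pose proof (Rabs_pos C0).
  exists (Rabs C0 + M * M). split; [nra|].
  intros x Hx. apply Rmult_le_reg_r with (x * x); [nra|].
  replace ((Rabs C0 + M * M) / (x * x) * (x * x)) with (Rabs C0 + M * M) by (field; lra).
  destruct (Rle_or_lt x (- M)) as [Hfar|Hnear].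
  - assert (Habs : Rabs x = - x) by (apply Rabs_left; lra).
    assert (Hpow : Rpower (Rabs x) (-1 - alpha) * (x * x) <= 1).
    { replace (x * x) with (Rpower (Rabs x) (INR 2)).
      - rewrite <- Rpower_plus, <- (Rpower_O (Rabs x)) by lra.
        apply Rle_Rpower; simpl; lra.
      - rewrite Rpower_pow by lra. simpl. rewrite Habs. ring. }
    pose proof (HC0 x ltac:(lra)) as Hs. pose proof (Rle_abs (s x)).
    assert (0 < Rpower (Rabs x) (-1 - alpha)) by apply exp_pos.
    assert (C0 * Rpower (Rabs x) (-1 - alpha) <= Rabs C0 * Rpower (Rabs x) (-1 - alpha))
      by (apply Rmult_le_compat_r; [lra|apply Rle_abs]).
    assert (0 <= x * x) by nra. nra.
  - pose proof (Hle1 x). nra.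
Qed.

Section Segment.

Variables (a b : R) (f : R -> R).
Hypothesis a_lt_b : a < b.
Hypothesis f_cont : continuous_on_ab f a b.

(* f is only continuous on [a, b]; composed with the projection onto [a, b] it becomes
   continuous on R, so that continuity_ab_maj and ex_RInt_continuous apply. *)
Let clamp t := Rmax a (Rmin b t).

Lemma clamp_in t : a <= clamp t <= b.
Proof. unfold clamp, Rmax, Rmin. repeat destruct Rle_dec; lra. Qed.

Lemma clamp_id t : a <= t <= b -> clamp t = t.
Proof. unfold clamp, Rmax, Rmin. repeat destruct Rle_dec; lra. Qed.

Lemma clamp_lipschitz t u : Rabs (clamp t - clamp u) <= Rabs (t - u).
Proof.
  unfold clamp, Rmax, Rmin. repeat destruct Rle_dec; unfold Rabs; repeat destruct Rcase_abs; lra.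
Qed.

Lemma continuity_pt_clamp z : continuity_pt (fun t => f (clamp t)) z.
Proof.
  intros eps Heps. destruct (f_cont _ (clamp_in z) eps Heps) as [d [Hd Hfd]].
  exists d. split; [easy|]. intros x [_ Hx]. simpl in *. unfold R_dist in *.
  apply Hfd; [apply clamp_in|]. eapply Rle_lt_trans; [apply clamp_lipschitz|easy].
Qed.

Lemma continuous_on_ab_bounded : exists B, forall t, a <= t <= b -> Rabs (f t) <= B.
Proof.
  destruct (continuity_ab_maj (fun t => Rabs (f (clamp t))) a b (Rlt_le _ _ a_lt_b))
    as [M [HM _]].
  { intros z _. apply (continuity_pt_comp (fun t => f (clamp t)) Rabs).
    - apply continuity_pt_clamp.
    - apply Rcontinuity_abs. }
  exists (Rabs (f (clamp M))). intros t Ht. rewrite <- (clamp_id t Ht). now apply HM.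
Qed.

Lemma ex_RInt_on_ab u v : a <= u -> u <= v -> v <= b -> ex_RInt f u v.
Proof.
  intros Hu Huv Hv. apply ex_RInt_ext with (fun t => f (clamp t)).
  - intros x Hx. rewrite Rmin_left in Hx by lra. rewrite Rmax_right in Hx by lra.
    rewrite clamp_id; [easy|lra].
  - apply (@ex_RInt_continuous R_CompleteNormedModule). intros z _.
    apply continuity_pt_filterlim, continuity_pt_clamp.
Qed.

Lemma cell_mean_dist n k v eta : 0 < INR n ->
  a <= IZR k / INR n -> (IZR k + 1) / INR n <= b ->
  (forall t, IZR k / INR n <= t <= (IZR k + 1) / INR n -> Rabs (f t - v) <= eta) ->
  Rabs (cell_mean f n k - v) <= eta.
Proof.
  intros Hn Hu Hw Hf. unfold cell_mean.
  set (u := IZR k / INR n) in *. set (w := (IZR k + 1) / INR n) in *.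
  assert (Hlen : INR n * (w - u) = 1) by (unfold u, w; field; lra).
  assert (Huw : u <= w) by (apply Rmult_le_reg_l with (INR n); lra).
  assert (Hint : ex_RInt f u w) by (apply ex_RInt_on_ab; lra).
  assert (Hdiff : RInt (fun t => f t - v) u w = RInt f u w - (w - u) * v).
  { rewrite (RInt_minus f (fun _ => v)); [|easy|apply ex_RInt_const].
    now rewrite RInt_const. }
  assert (Hbound : Rabs (RInt (fun t => f t - v) u w) <= (w - u) * eta).
  { apply abs_RInt_le_const; auto.
    apply (ex_RInt_minus f (fun _ => v)); [easy|apply ex_RInt_const]. }
  replace (INR n * RInt f u w - v) with (INR n * RInt (fun t => f t - v) u w)
    by (rewrite Hdiff, Rmult_minus_distr_l, <- Rmult_assoc, Hlen; ring).
  rewrite Rabs_mult, Rabs_right by lra.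
  apply Rle_trans with (INR n * ((w - u) * eta)); [apply Rmult_le_compat_l; lra|].
  rewrite <- Rmult_assoc, Hlen. lra.
Qed.

Lemma cell_mean_split n k : 0 < INR n ->
  a <= IZR k / INR n -> (IZR k + 1) / INR n <= b ->
  cell_mean f (2 * n) (2 * k) + cell_mean f (2 * n) (2 * k + 1) = 2 * cell_mean f n k.
Proof.
  intros Hn H1 H2. unfold cell_mean. rewrite mult_INR, !plus_IZR, !mult_IZR. simpl (INR 2).
  simpl (IZR 2).
  replace (2 * IZR k / ((1 + 1) * INR n)) with (IZR k / INR n) by (field; lra).
  replace ((2 * IZR k + 1 + 1) / ((1 + 1) * INR n)) with ((IZR k + 1) / INR n) by (field; lra).
  replace ((2 * IZR k + 1) / ((1 + 1) * INR n)) with ((IZR k + / 2) / INR n) by (field; lra).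
  assert (IZR k / INR n <= (IZR k + / 2) / INR n)
    by (apply Rmult_le_reg_l with (INR n); auto; field_simplify; lra).
  assert ((IZR k + / 2) / INR n <= (IZR k + 1) / INR n)
    by (apply Rmult_le_reg_l with (INR n); auto; field_simplify; lra).
  rewrite <- (RInt_Chasles f (IZR k / INR n) ((IZR k + / 2) / INR n) ((IZR k + 1) / INR n)).
  - change (plus ?u ?v) with (u + v). ring.
  - apply ex_RInt_on_ab; lra.
  - apply ex_RInt_on_ab; lra.
Qed.

Lemma cell_sum_double n P J : 0 < INR n ->
  (kmin a n <= P)%Z -> (P + Z.of_nat J <= kmax b n)%Z ->
  sum_lt (fun l => cell_mean f (2 * n) (2 * P + Z.of_nat l)) (2 * J) =
  2 * sum_lt (fun l => cell_mean f n (P + Z.of_nat l)) J.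
Proof.
  intros Hn HP HQ. rewrite sum_lt_pairs, <- sum_lt_scal. apply sum_lt_ext. intros l Hl.
  replace (2 * P + Z.of_nat (2 * l))%Z with (2 * (P + Z.of_nat l))%Z by lia.
  replace (2 * P + Z.of_nat (2 * l + 1))%Z with (2 * (P + Z.of_nat l) + 1)%Z by lia.
  destruct (cell_in a b n (P + Z.of_nat l) Hn) as [H1 H2]; [lia|lia|].
  now apply cell_mean_split.
Qed.

Lemma continuous_on_ab_const_of_interior c :
  (forall x, a < x < b -> f x = c) -> forall x, a <= x <= b -> f x = c.
Proof.
  intros Hint z Hz. apply Req_le_aux. intros [eta Heta]. simpl.
  destruct (f_cont z Hz eta Heta) as [d [Hd Hfd]].
  pose proof (Rmin_l 1 (d / (b - a))). pose proof (Rmin_r 1 (d / (b - a))).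
  set (t := Rmin 1 (d / (b - a))) in *.
  assert (Ht : 0 < t) by (apply Rmin_glb_lt; [lra|apply Rdiv_lt_0_compat; lra]).
  assert (Htd : t * (b - a) <= d).
  { apply Rle_trans with (d / (b - a) * (b - a)); [apply Rmult_le_compat_r; lra|].
    right. field. lra. }
  set (y := z + t * ((a + b) / 2 - z)).
  assert (Hy : a < y < b) by (unfold y; split; nra).
  assert (Hyz : Rabs (y - z) < d).
  { unfold y. replace (z + t * ((a + b) / 2 - z) - z) with (t * ((a + b) / 2 - z)) by ring.
    rewrite Rabs_mult, Rabs_right by lra.
    apply Rle_lt_trans with (t * ((b - a) / 2)); [|lra].
    apply Rmult_le_compat_l; [lra|]. apply Rabs_le. lra. }
  specialize (Hfd y ltac:(lra) Hyz). rewrite (Hint y Hy) in Hfd.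
  rewrite Rabs_minus_sym. lra.
Qed.

End Segment.

Section Sigmoid.

Variable s : R -> R.
Hypothesis s_mono : forall x y, x <= y -> s x <= s y.
Hypothesis s_lim_m_infty : is_lim s m_infty 0.
Hypothesis s_lim_p_infty : is_lim s p_infty 1.
Hypothesis s_sym : Sigma1 s.
Hypothesis s_concave : forall x y t, 0 <= x -> 0 <= y -> 0 <= t <= 1 ->
  t * s x + (1 - t) * s y <= s (t * x + (1 - t) * y).
Hypothesis s_1_lt_1 : s 1 < 1.

Lemma sigma_opp x : s (- x) = 1 - s x.
Proof. pose proof (s_sym x). lra. Qed.

Lemma sigma_ge0 x : 0 <= s x.
Proof.
  destruct (Rle_or_lt 0 (s x)) as [|Hneg]; [easy|].
  apply is_lim_spec in s_lim_m_infty. simpl in s_lim_m_infty.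
  destruct (s_lim_m_infty (mkposreal (- s x) ltac:(lra))) as [M HM]. simpl in HM.
  pose proof (Rmin_r x (M - 1)).
  specialize (HM (Rmin x (M - 1)) ltac:(lra)). apply Rabs_def2 in HM.
  pose proof (s_mono _ _ (Rmin_l x (M - 1))). lra.
Qed.

Lemma sigma_le1 x : s x <= 1.
Proof. pose proof (sigma_ge0 (- x)). rewrite sigma_opp in *. lra. Qed.

(* A flat piece of a concave function on [0,+oo) would be its maximum,
   which contradicts s 1 < 1 = lim_{+oo} s. *)
Lemma sigma_lt_from_nonneg x y : 0 <= x -> x < y -> y <= 1 -> s x < s y.
Proof.
  intros Hx Hxy Hy.
  destruct (Rle_or_lt (s y) (s x)) as [Hflat|]; [exfalso|easy].
  assert (Hbeyond : forall z, y < z -> s z <= s y).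
  { intros z Hz.
    set (t := (z - y) / (z - x)).
    assert (Ht : 0 <= t <= 1).
    { unfold t. split; [apply Rdiv_le_0_compat; lra|].
      apply Rmult_le_reg_r with (z - x); [lra|]. field_simplify; lra. }
    assert (Hty : t * x + (1 - t) * z = y) by (unfold t; field; lra).
    assert (H1t : t < 1).
    { unfold t. apply Rmult_lt_reg_r with (z - x); [lra|]. field_simplify; lra. }
    pose proof (s_concave x z t Hx ltac:(lra) Ht). rewrite Hty in *.
    pose proof (s_mono x y ltac:(lra)).
    apply Rmult_le_reg_l with (1 - t); nra. }
  apply is_lim_spec in s_lim_p_infty. simpl in s_lim_p_infty.
  destruct (s_lim_p_infty (mkposreal (1 - s 1) ltac:(lra))) as [M HM]. simpl in HM.
  pose proof (Rmax_l M y). pose proof (Rmax_r M y).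
  specialize (HM (Rmax M y + 1) ltac:(lra)). apply Rabs_def2 in HM.
  pose proof (Hbeyond (Rmax M y + 1) ltac:(lra)). pose proof (s_mono y 1 Hy). lra.
Qed.

Lemma sigma_zero : s 0 = / 2.
Proof. pose proof (sigma_opp 0). rewrite Ropp_0 in *. lra. Qed.

Lemma sigma_lt x y : x < y -> -1 < y -> x < 1 -> s x < s y.
Proof.
  intros Hxy Hy Hx.
  assert (Hmid : forall u v, -1 <= u -> u < v -> v <= 1 -> s u < s v).
  { intros u v Hu Huv Hv.
    destruct (Rle_or_lt 0 u); [now apply sigma_lt_from_nonneg|].
    destruct (Rle_or_lt v 0).
    - pose proof (sigma_lt_from_nonneg (- v) (- u) ltac:(lra) ltac:(lra) ltac:(lra)).
      rewrite !sigma_opp in *. lra.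
    - pose proof (sigma_lt_from_nonneg 0 v ltac:(lra) ltac:(lra) ltac:(lra)).
      pose proof (sigma_lt_from_nonneg 0 (- u) ltac:(lra) ltac:(lra) ltac:(lra)).
      rewrite sigma_opp, sigma_zero in *. lra. }
  pose proof (s_mono _ _ (Rmax_l x (-1))). pose proof (s_mono _ _ (Rmin_l y 1)).
  enough (s (Rmax x (-1)) < s (Rmin y 1)) by lra.
  apply Hmid; unfold Rmax, Rmin; repeat destruct Rle_dec; lra.
Qed.

Lemma sigma_avg_opp v : sigma_avg s (1 - v) = 1 - sigma_avg s v.
Proof.
  unfold sigma_avg. replace (1 - v) with (- (v - 1)) by ring.
  replace (- (v - 1) - 1) with (- v) by ring. rewrite !sigma_opp. field.
Qed.

Lemma sigma_avg_half : sigma_avg s (/ 2) = / 2.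
Proof.
  pose proof (sigma_avg_opp (/ 2)). replace (1 - / 2) with (/ 2) in * by field. lra.
Qed.

Lemma sigma_avg_bounds v w : v <= w -> 0 <= sigma_avg s v <= s w.
Proof.
  intros Hvw. unfold sigma_avg.
  pose proof (sigma_ge0 v). pose proof (sigma_ge0 (v - 1)).
  pose proof (s_mono (v - 1) w ltac:(lra)). pose proof (s_mono v w Hvw). lra.
Qed.

Lemma Kant_den_pos a b n u : (kmin a n < kmax b n)%Z ->
  IZR (kmin a n) - 1 < u < IZR (kmax b n) + 1 -> 0 < Kant_den s a b n u.
Proof.
  intros Hk Hu. rewrite Kant_den_telescope by lia. unfold sigma_avg.
  apply IZR_lt in Hk.
  pose proof (s_mono (u - IZR (kmax b n) + 1) (u - IZR (kmin a n) + 1) ltac:(lra)).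
  pose proof (sigma_lt (u - IZR (kmax b n) + 1 - 1) (u - IZR (kmin a n) + 1 - 1)
    ltac:(lra) ltac:(lra) ltac:(lra)).
  lra.
Qed.

Lemma one_sub_Kant_den a b n u m1 m2 : (kmin a n <= kmax b n)%Z ->
  INR m1 <= u - IZR (kmin a n) + 1 -> INR m2 <= IZR (kmax b n) - u ->
  0 <= 1 - Kant_den s a b n u <= tail_weight s m1 + tail_weight s m2.
Proof.
  intros Hk Hm1 Hm2. rewrite Kant_den_telescope by lia. unfold tail_weight.
  pose proof (sigma_avg_opp (u - IZR (kmin a n) + 1)).
  pose proof (sigma_avg_bounds (1 - (u - IZR (kmin a n) + 1)) (1 - INR m1) ltac:(lra)).
  pose proof (sigma_avg_bounds (u - IZR (kmax b n) + 1) (1 - INR m2) ltac:(lra)).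
  lra.
Qed.

Lemma Kant_const a b f c n x : 2 <= INR n * (b - a) ->
  (forall t, a <= t <= b -> f t = c) -> a <= x <= b -> Kant s a b n f x = c.
Proof.
  intros Hn Hf Hx.
  pose proof (kmax_sub_kmin a b n) as Hk.
  assert (Hn0 : 0 < INR n) by (pose proof (pos_INR n); nra).
  assert (Hlt : (kmin a n < kmax b n)%Z) by (apply lt_IZR; lra).
  assert (Hden : 0 < Kant_den s a b n (INR n * x)).
  { apply Kant_den_pos; auto. unfold kmin, kmax.
    destruct (Rceil_spec (INR n * a)), (Rfloor_spec (INR n * b)). nra. }
  rewrite Kant_eq.
  replace (Kant_num s a b n f (INR n * x)) with (c * Kant_den s a b n (INR n * x)).
  - field. lra.
  - unfold Kant_num, Kant_den. rewrite <- sum_lt_scal. apply sum_lt_ext. intros i Hi.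
    rewrite (cell_mean_const f n _ c Hn0); auto.
    intros t Ht. apply Hf.
    destruct (knode_bounds a b n i Hi) as [Hk1 Hk2].
    destruct (cell_in a b n _ Hn0 Hk1 Hk2). lra.
Qed.

Lemma Kant_rate_of_const a b f c : a < b -> (forall t, a <= t <= b -> f t = c) ->
  forall eps, 0 < eps -> eventually (fun n => Kant_err_le s a b f n (eps / INR n)).
Proof.
  intros Hab Hf eps Heps.
  apply (filter_imp (fun n => 2 <= INR n * (b - a))); [|apply eventually_mul_ge; lra].
  intros n Hn x Hx.
  rewrite Kant_const with (c := c), Hf, Rminus_diag, Rabs_R0 by auto.
  apply Rdiv_le_0_compat; [lra|]. pose proof (pos_INR n). nra.
Qed.

Variable C : R.
Hypothesis C_pos : 0 < C.
Hypothesis s_decay : forall x, x <= -1 -> s x <= C / (x * x).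

Lemma tail_weight_bounds m : 0 <= tail_weight s m <= 1.
Proof. split; [apply sigma_ge0|apply sigma_le1]. Qed.

Lemma tail_weight_le_diff m : (3 <= m)%nat ->
  tail_weight s m <= C / (INR m - 2) - C / (INR m - 1).
Proof.
  intros Hm. apply le_INR in Hm. simpl in Hm. unfold tail_weight.
  replace (C / (INR m - 2) - C / (INR m - 1)) with (C / ((INR m - 2) * (INR m - 1)))
    by (field; lra).
  eapply Rle_trans; [apply s_decay; lra|].
  replace ((1 - INR m) * (1 - INR m)) with ((INR m - 1) * (INR m - 1)) by ring.
  unfold Rdiv. apply Rmult_le_compat_l; [lra|]. apply Rinv_le_contravar; nra.
Qed.

Lemma tail_weight_sum_from p J : (3 <= p)%nat ->
  sum_lt (fun l => tail_weight s (p + l)) J <= tail_bound C p.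
Proof.
  intros Hp.
  set (F l := - C / (INR (p + l) - 2)).
  apply Rle_trans with (sum_lt (fun l => F (S l) - F l) J).
  - apply sum_lt_le. intros l _. unfold F.
    assert (Hpl : 3 <= INR (p + l)) by (replace 3 with (INR 3) by (simpl; lra); apply le_INR; lia).
    rewrite Nat.add_succ_r, S_INR.
    replace (- C / (INR (p + l) + 1 - 2) - - C / (INR (p + l) - 2))
      with (C / (INR (p + l) - 2) - C / (INR (p + l) - 1)) by (field; lra).
    apply tail_weight_le_diff. lia.
  - rewrite sum_lt_telescope. unfold F, tail_bound. rewrite Nat.add_0_r.
    apply le_INR in Hp. rewrite plus_INR. pose proof (pos_INR J). simpl in Hp.
    assert (0 <= C / (INR p + INR J - 2)) by (apply Rdiv_le_0_compat; lra).
    unfold Rdiv in *. lra.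
Qed.

Lemma tail_weight_sum M : sum_lt (tail_weight s) M <= 3 + C.
Proof.
  apply Rle_trans with (sum_lt (tail_weight s) (3 + M)).
  - rewrite Nat.add_comm, sum_lt_split.
    pose proof (sum_lt_nonneg (fun i => tail_weight s (M + i)) 3
      (fun i _ => proj1 (tail_weight_bounds _))). lra.
  - rewrite sum_lt_split. pose proof (tail_weight_sum_from 3 M (le_n _)).
    unfold tail_bound in *. simpl (INR 3) in *. replace (1 + 1 + 1 - 2) with 1 in * by ring.
    cbn [sum_lt]. pose proof (tail_weight_bounds 0). pose proof (tail_weight_bounds 1).
    pose proof (tail_weight_bounds 2). unfold Rdiv in *. rewrite Rinv_1 in *. lra.
Qed.

(* Split the weighted sum into the first M0 terms (g small) and the tail (w small). *)
Lemma weighted_sum_bound (g w : nat -> R) M M0 eta B :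
  (3 <= M0)%nat -> (M0 <= M)%nat -> (forall m, 0 <= w m <= tail_weight s m) ->
  (forall m, (m < M0)%nat -> Rabs (g m) <= eta) ->
  (forall m, (m < M)%nat -> Rabs (g m) <= B) ->
  Rabs (sum_lt (fun m => g m * w m) M) <= eta * (3 + C) + B * tail_bound C M0.
Proof.
  intros H3 HM Hw Hnear Hall.
  assert (0 <= eta) by (specialize (Hnear O ltac:(lia)); pose proof (Rabs_pos (g O)); lra).
  assert (0 <= B) by (specialize (Hall O ltac:(lia)); pose proof (Rabs_pos (g O)); lra).
  replace M with (M0 + (M - M0))%nat by lia. rewrite sum_lt_split.
  eapply Rle_trans; [apply Rabs_triang|]. apply Rplus_le_compat.
  - eapply Rle_trans; [apply sum_lt_abs|].
    apply Rle_trans with (sum_lt (fun m => eta * tail_weight s m) M0).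
    + apply sum_lt_le. intros i Hi. rewrite Rabs_mult, (Rabs_right (w i)) by (apply Rle_ge, Hw).
      apply Rmult_le_compat; [apply Rabs_pos|apply Hw|auto|apply Hw].
    + rewrite sum_lt_scal. apply Rmult_le_compat_l; auto. apply tail_weight_sum.
  - eapply Rle_trans; [apply sum_lt_abs|].
    apply Rle_trans with (sum_lt (fun m => B * tail_weight s (M0 + m)) (M - M0)).
    + apply sum_lt_le. intros i Hi. rewrite Rabs_mult, (Rabs_right (w _)) by (apply Rle_ge, Hw).
      apply Rmult_le_compat; [apply Rabs_pos|apply Hw|apply Hall; lia|apply Hw].
    + rewrite sum_lt_scal. apply Rmult_le_compat_l; auto. now apply tail_weight_sum_from.
Qed.

Lemma weight_sum_diff (w : nat -> R) M1 M2 M0 :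
  (3 <= M0)%nat -> (M0 <= M1)%nat -> (M0 <= M2)%nat ->
  (forall m, 0 <= w m <= tail_weight s m) ->
  Rabs (sum_lt w M1 - sum_lt w M2) <= tail_bound C M0.
Proof.
  intros H3 H1 H2 Hw.
  assert (Hle : forall p q, (M0 <= p)%nat -> (p <= q)%nat ->
            0 <= sum_lt w q - sum_lt w p <= tail_bound C M0).
  { intros p q Hp Hpq. replace q with (p + (q - p))%nat by lia. rewrite sum_lt_split.
    replace (sum_lt w p + _ - sum_lt w p) with (sum_lt (fun i => w (p + i)%nat) (q - p))
      by ring.
    split; [apply sum_lt_nonneg; intros; apply Hw|].
    eapply Rle_trans; [apply sum_lt_le; intros; apply Hw|].
    eapply Rle_trans; [apply tail_weight_sum_from; lia|].
    apply tail_bound_antimono; lra || lia. }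
  destruct (Nat.le_ge_cases M1 M2) as [H|H].
  - destruct (Hle M1 M2 H1 H). rewrite Rabs_minus_sym, Rabs_right; lra.
  - destruct (Hle M2 M1 H2 H). rewrite Rabs_right; lra.
Qed.

Lemma boundary_term_split a b n f th P :
  (kmin a n <= P)%Z -> (P <= kmax b n)%Z ->
  boundary_term s a b n f th P =
  sum_lt (fun m => cell_mean f n (P + Z.of_nat m) * sigma_avg s (th - INR m))
    (ncells a b n - Z.to_nat (P - kmin a n))
  - sum_lt (fun m => cell_mean f n (P - 1 - Z.of_nat m) * sigma_avg s (- th - INR m))
    (Z.to_nat (P - kmin a n)).
Proof.
  intros HP1 HP2. unfold boundary_term.
  set (p := Z.to_nat (P - kmin a n)).
  replace (ncells a b n) with (p + (ncells a b n - p))%nat at 1 by (unfold p, ncells; lia).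
  rewrite sum_lt_split.
  rewrite (sum_lt_ext (fun i => cell_mean f n (knode a n (p + i)) * _)
    (fun m => cell_mean f n (P + Z.of_nat m) * sigma_avg s (th - INR m))).
  2:{ intros m _. replace (knode a n (p + m)) with (P + Z.of_nat m)%Z by (unfold knode, p; lia).
      rewrite plus_IZR, <- INR_IZR_INZ. do 2 f_equal. ring. }
  enough (Hleft :
    sum_lt (fun i => cell_mean f n (knode a n i) * sigma_avg s (IZR P + th - IZR (knode a n i))) p
    - sum_lt (fun i => cell_mean f n (knode a n i)) p
    = - sum_lt (fun m => cell_mean f n (P - 1 - Z.of_nat m) * sigma_avg s (- th - INR m)) p)
    by lra.
  rewrite <- sum_lt_minus, <- sum_lt_opp, sum_lt_rev.
  apply sum_lt_ext. intros m Hm.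
  replace (knode a n (p - 1 - m)) with (P - 1 - Z.of_nat m)%Z by (unfold knode, p in *; lia).
  rewrite !minus_IZR, <- INR_IZR_INZ.
  replace (- th - INR m) with (1 - (IZR P + th - (IZR P - 1 - INR m))) by ring.
  rewrite sigma_avg_opp. ring.
Qed.

(* For th = 1/2 the two weight sequences are shifts of each other, up to the single
   term sigma_avg s (1/2) = 1/2. *)
Lemma boundary_weights_balance th M1 M2 M0 : th = 0 \/ th = / 2 ->
  (3 <= M0)%nat -> (S M0 <= M1)%nat -> (M0 <= M2)%nat ->
  Rabs (sum_lt (fun m => sigma_avg s (th - INR m)) M1
        - sum_lt (fun m => sigma_avg s (- th - INR m)) M2 - th) <= tail_bound C M0.
Proof.
  intros Hth H3 H1 H2.
  assert (Hw : forall v, v <= 1 -> forall m, 0 <= sigma_avg s (v - INR m) <= tail_weight s m)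
    by (intros v Hv m; apply sigma_avg_bounds; lra).
  destruct Hth as [->| ->].
  - rewrite Ropp_0, Rminus_0_r. apply weight_sum_diff; auto with arith.
    intros m. apply Hw. lra.
  - replace M1 with (S (M1 - 1)) by lia. rewrite sum_lt_S_l.
    rewrite Rminus_0_r, sigma_avg_half.
    rewrite (sum_lt_ext (fun m => sigma_avg s (/ 2 - INR (S m)))
      (fun m => sigma_avg s (- / 2 - INR m))) by (intros; rewrite S_INR; f_equal; field).
    replace (/ 2 + _ - _ - / 2) with
      (sum_lt (fun m => sigma_avg s (- / 2 - INR m)) (M1 - 1)
       - sum_lt (fun m => sigma_avg s (- / 2 - INR m)) M2) by ring.
    apply weight_sum_diff; try lia. intros m. apply Hw. lra.
Qed.

Variables (a b : R) (f : R -> R).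
Hypothesis a_lt_b : a < b.
Hypothesis f_cont : continuous_on_ab f a b.
Variable B : R.
Hypothesis f_bound : forall t, a <= t <= b -> Rabs (f t) <= B.

Lemma bound_nonneg : 0 <= B.
Proof. pose proof (f_bound a ltac:(lra)). pose proof (Rabs_pos (f a)). lra. Qed.

Lemma cell_mean_bound n k : 0 < INR n -> (kmin a n <= k)%Z -> (k + 1 <= kmax b n)%Z ->
  Rabs (cell_mean f n k) <= B.
Proof.
  intros Hn Hk1 Hk2. destruct (cell_in a b n k Hn Hk1 Hk2).
  rewrite <- (Rminus_0_r (cell_mean f n k)).
  apply (cell_mean_dist a b f); auto. intros t Ht. rewrite Rminus_0_r. apply f_bound. lra.
Qed.

Lemma cell_mean_near x eta : a < x < b -> 0 < eta ->
  exists delta, 0 < delta /\ forall n k, 0 < INR n ->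
    (kmin a n <= k)%Z -> (k + 1 <= kmax b n)%Z ->
    INR n * (x - delta) <= IZR k -> IZR k + 1 <= INR n * (x + delta) ->
    Rabs (cell_mean f n k - f x) <= eta.
Proof.
  intros Hx Heta. destruct (f_cont x ltac:(lra) eta Heta) as [d [Hd Hfd]].
  exists (d / 2). split; [lra|]. intros n k Hn Hk1 Hk2 Hlo Hhi.
  destruct (cell_in a b n k Hn Hk1 Hk2).
  apply (cell_mean_dist a b f); auto. intros t Ht.
  assert (x - d / 2 <= t <= x + d / 2).
  { split.
    - apply Rmult_le_reg_l with (INR n); auto.
      apply Rle_trans with (IZR k); [lra|].
      apply Rmult_le_reg_r with (/ INR n); [now apply Rinv_0_lt_compat|].
      replace (INR n * t * / INR n) with t by (field; lra). unfold Rdiv in Ht. lra.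
    - apply Rmult_le_reg_l with (INR n); auto.
      apply Rle_trans with (IZR k + 1); [|lra].
      apply Rmult_le_reg_r with (/ INR n); [now apply Rinv_0_lt_compat|].
      replace (INR n * t * / INR n) with t by (field; lra). unfold Rdiv in Ht. lra. }
  left. apply Hfd; [lra|]. apply Rabs_def1; lra.
Qed.

Lemma cell_mean_dev_bound n k x : 0 < INR n ->
  (kmin a n <= k)%Z -> (k + 1 <= kmax b n)%Z -> a <= x <= b ->
  Rabs (cell_mean f n k - f x) <= 2 * B.
Proof.
  intros Hn Hk1 Hk2 Hx. pose proof (cell_mean_bound n k Hn Hk1 Hk2). pose proof (f_bound x Hx).
  pose proof (Rabs_triang (cell_mean f n k) (- f x)). rewrite Rabs_Ropp in *.
  unfold Rminus. lra.
Qed.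

Lemma boundary_term_estimate th x n P M0 eta : th = 0 \/ th = / 2 -> a <= x <= b ->
  0 < INR n -> (3 <= M0)%nat ->
  (kmin a n + Z.of_nat M0 <= P)%Z -> (P + Z.of_nat M0 < kmax b n)%Z ->
  (forall m, (m < M0)%nat -> Rabs (cell_mean f n (P + Z.of_nat m) - f x) <= eta) ->
  (forall m, (m < M0)%nat -> Rabs (cell_mean f n (P - 1 - Z.of_nat m) - f x) <= eta) ->
  Rabs (boundary_term s a b n f th P - th * f x)
  <= 2 * (eta * (3 + C)) + 5 * (B * tail_bound C M0).
Proof.
  intros Hth Hx Hn HM0 HPlo HPhi Hnear1 Hnear2. pose proof bound_nonneg.
  rewrite boundary_term_split by lia.
  set (p := Z.to_nat (P - kmin a n)). set (q := (ncells a b n - p)%nat).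
  assert (Hp : (M0 <= p)%nat) by (unfold p; lia).
  assert (Hq : (S M0 <= q)%nat) by (unfold q, p, ncells; lia).
  assert (Hth' : 0 <= th <= / 2) by (destruct Hth; subst; lra).
  assert (Hw1 : forall m, 0 <= sigma_avg s (th - INR m) <= tail_weight s m)
    by (intros m; apply sigma_avg_bounds; lra).
  assert (Hw2 : forall m, 0 <= sigma_avg s (- th - INR m) <= tail_weight s m)
    by (intros m; apply sigma_avg_bounds; lra).
  assert (Hfar1 : forall m, (m < q)%nat ->
            Rabs (cell_mean f n (P + Z.of_nat m) - f x) <= 2 * B)
    by (intros m Hm; apply cell_mean_dev_bound; auto; unfold q, p, ncells in Hm; lia).
  assert (Hfar2 : forall m, (m < p)%nat ->
            Rabs (cell_mean f n (P - 1 - Z.of_nat m) - f x) <= 2 * B)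
    by (intros m Hm; apply cell_mean_dev_bound; auto; unfold p in Hm; lia).
  pose proof (weighted_sum_bound _ _ q M0 eta (2 * B) HM0 ltac:(lia) Hw1 Hnear1 Hfar1) as W1.
  pose proof (weighted_sum_bound _ _ p M0 eta (2 * B) HM0 Hp Hw2 Hnear2 Hfar2) as W2.
  pose proof (boundary_weights_balance th q p M0 Hth HM0 Hq Hp) as W3.
  rewrite (sum_lt_center _ _ (f x) q), (sum_lt_center _ _ (f x) p).
  set (T := sum_lt (fun m => sigma_avg s (th - INR m)) q
            - sum_lt (fun m => sigma_avg s (- th - INR m)) p - th) in W3.
  assert (W4 : Rabs (f x * T) <= B * tail_bound C M0).
  { rewrite Rabs_mult. apply Rmult_le_compat; auto using Rabs_pos. }
  apply Rabs_le_between in W1, W2, W4. apply Rabs_le. unfold T in W4. lra.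
Qed.

Lemma boundary_term_near th x tau : th = 0 \/ th = / 2 -> a < x < b -> 0 < tau ->
  eventually (fun n => forall P, Rabs (IZR P - INR n * x) <= 2 ->
    Rabs (boundary_term s a b n f th P - th * f x) <= tau).
Proof.
  intros Hth Hx Htau. pose proof bound_nonneg.
  destruct (tail_bound_small (5 * B) C (tau / 2)) as [M0 [HM0 HM0tail]]; [lra|lra|lra|].
  set (eta := tau / (4 * (3 + C))).
  destruct (cell_mean_near x eta Hx) as [d [Hd Hnear]]; [apply Rdiv_lt_0_compat; lra|].
  pose proof (pos_INR M0).
  assert (Hlarge : eventually (fun n => INR M0 + 4 <= INR n * d /\
            INR M0 + 4 <= INR n * (x - a) /\ INR M0 + 4 <= INR n * (b - x)))
    by (repeat apply filter_and; apply eventually_mul_ge; lra).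
  refine (filter_imp _ _ _ Hlarge). intros n [Hnd [Hna Hnb]] P HP.
  assert (Hn : 0 < INR n) by nra.
  apply Rabs_le_between' in HP.
  assert (HPlo : (kmin a n + Z.of_nat M0 <= P)%Z) by (apply (kmin_add_le a n x); lra).
  assert (HPhi : (P + Z.of_nat M0 < kmax b n)%Z) by (apply (add_lt_kmax b n x); lra).
  eapply Rle_trans; [apply (boundary_term_estimate th x n P M0 eta); auto; try lra|].
  - intros m Hm. pose proof (lt_INR _ _ Hm). pose proof (pos_INR m).
    apply Hnear; auto; try lia; rewrite ?plus_IZR, <- INR_IZR_INZ; lra.
  - intros m Hm. pose proof (lt_INR _ _ Hm). pose proof (pos_INR m).
    apply Hnear; auto; try lia; rewrite ?plus_IZR, !minus_IZR, <- INR_IZR_INZ; lra.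
  - assert (eta * (3 + C) = tau / 4) by (unfold eta; field; lra). lra.
Qed.

Lemma Kant_num_near_sample n d u m1 m2 : d <= 1 -> Kant_err_le s a b f n d ->
  0 < INR n -> (kmin a n < kmax b n)%Z -> IZR (kmin a n) <= u <= IZR (kmax b n) ->
  INR m1 <= u - IZR (kmin a n) + 1 -> INR m2 <= IZR (kmax b n) - u ->
  Rabs (Kant_num s a b n f u - f (u / INR n))
  <= d + (B + 1) * (tail_weight s m1 + tail_weight s m2).
Proof.
  intros Hd Herr Hn Hk Hu Hm1 Hm2. pose proof bound_nonneg.
  pose proof (Rceil_spec (INR n * a)) as Hlo. pose proof (Rfloor_spec (INR n * b)) as Hhi.
  fold (kmin a n) in Hlo. fold (kmax b n) in Hhi.
  assert (Hx : a <= u / INR n <= b).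
  { split; apply Rmult_le_reg_l with (INR n); auto; field_simplify; lra. }
  specialize (Herr _ Hx). rewrite Kant_eq in Herr.
  replace (INR n * (u / INR n)) with u in Herr by (field; lra).
  assert (Hden : 0 < Kant_den s a b n u) by (apply Kant_den_pos; auto; lra).
  pose proof (one_sub_Kant_den a b n u m1 m2 ltac:(lia) Hm1 Hm2).
  eapply Rle_trans; [apply (Rabs_sub_of_ratio _ (Kant_den s a b n u) _ d B); auto|].
  rewrite Rabs_right by lra. apply Rplus_le_compat_l, Rmult_le_compat_l; lra.
Qed.

Lemma node_sum_defect n th d P Q : 0 <= th <= 1 -> d <= 1 -> Kant_err_le s a b f n d ->
  (kmin a n + 3 <= P)%Z -> (P <= Q)%Z -> (Q + 3 <= kmax b n)%Z ->
  Rabs (sum_lt (fun l => Kant_num s a b n f (IZR P + INR l + th)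
                         - f ((IZR P + INR l + th) / INR n)) (Z.to_nat (Q - P)))
  <= INR (Z.to_nat (Q - P)) * d
     + (B + 1) * (tail_bound C (Z.to_nat (P - kmin a n))
                  + tail_bound C (Z.to_nat (kmax b n - Q))).
Proof.
  intros Hth Hd Herr HP HPQ HQ. pose proof bound_nonneg.
  set (J := Z.to_nat (Q - P)). set (p := Z.to_nat (P - kmin a n)).
  set (r := Z.to_nat (kmax b n - Q)).
  assert (HpR : IZR P = IZR (kmin a n) + INR p)
    by (unfold p; rewrite IZR_Z_to_nat, minus_IZR by lia; ring).
  assert (HJR : IZR Q = IZR P + INR J) by (unfold J; rewrite IZR_Z_to_nat, minus_IZR by lia; ring).
  assert (HrR : IZR (kmax b n) = IZR Q + INR r)
    by (unfold r; rewrite IZR_Z_to_nat, minus_IZR by lia; ring).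
  assert (Hn : 0 < INR n).
  { pose proof (Rceil_spec (INR n * a)). pose proof (Rfloor_spec (INR n * b)).
    assert (IZR (kmin a n) + 6 <= IZR (kmax b n))
      by (rewrite <- (plus_IZR _ 6); apply IZR_le; lia).
    unfold kmin, kmax in *. pose proof (pos_INR n). nra. }
  eapply Rle_trans; [apply sum_lt_abs|].
  eapply Rle_trans.
  { apply sum_lt_le. intros l Hl.
    assert (HJl : INR J = INR (J - 1 - l) + INR l + 1)
      by (rewrite <- plus_INR, <- S_INR; f_equal; lia).
    pose proof (pos_INR l). pose proof (pos_INR p). pose proof (pos_INR r).
    pose proof (pos_INR (J - 1 - l)).
    apply (Kant_num_near_sample n d _ (p + l) (r + (J - 1 - l))); auto;
      rewrite ?plus_INR; lra || lia. }
  rewrite sum_lt_plus, sum_lt_const, sum_lt_scal, sum_lt_plus.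
  rewrite Rmult_comm. apply Rplus_le_compat_l, Rmult_le_compat_l; [lra|].
  apply Rplus_le_compat.
  - apply tail_weight_sum_from. lia.
  - rewrite sum_lt_rev, (sum_lt_ext _ (fun l => tail_weight s (r + l)))
      by (intros; f_equal; lia).
    apply tail_weight_sum_from. lia.
Qed.

Lemma riemann_sum_defect n th d x y P Q : 0 <= th <= 1 -> d <= 1 ->
  Kant_err_le s a b f n d ->
  (kmin a n + 3 <= P)%Z -> (P <= Q)%Z -> (Q + 3 <= kmax b n)%Z ->
  Rabs (sum_lt (fun l => f ((IZR P + INR l + th) / INR n)) (Z.to_nat (Q - P))
        - sum_lt (fun l => cell_mean f n (P + Z.of_nat l)) (Z.to_nat (Q - P))
        - th * (f y - f x))
  <= INR (Z.to_nat (Q - P)) * d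
     + (B + 1) * (tail_bound C (Z.to_nat (P - kmin a n))
                  + tail_bound C (Z.to_nat (kmax b n - Q)))
     + Rabs (boundary_term s a b n f th P - th * f x)
     + Rabs (boundary_term s a b n f th Q - th * f y).
Proof.
  intros Hth Hd Herr HP HPQ HQ.
  pose proof (node_sum_defect n th d P Q Hth Hd Herr HP HPQ HQ) as Hdefect.
  rewrite sum_lt_minus, Kant_num_node_sum in Hdefect by lia.
  pose proof (proj1 (Rabs_le_between' (boundary_term s a b n f th P) (th * f x) _) (Rle_refl _)).
  pose proof (proj1 (Rabs_le_between' (boundary_term s a b n f th Q) (th * f y) _) (Rle_refl _)).
  apply Rabs_le_between in Hdefect. apply Rabs_le. lra.
Qed.

Hypothesis Kant_rate :
  forall eps, 0 < eps -> eventually (fun n => Kant_err_le s a b f n (eps / INR n)).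

Lemma riemann_sum_near_cells th x y tau : th = 0 \/ th = / 2 ->
  a < x -> x < y -> y < b -> 0 < tau ->
  eventually (fun n => forall P Q,
    Rabs (IZR P - INR n * x) <= 2 -> Rabs (IZR Q - INR n * y) <= 2 ->
    Rabs (sum_lt (fun l => f ((IZR P + INR l + th) / INR n)) (Z.to_nat (Q - P))
          - sum_lt (fun l => cell_mean f n (P + Z.of_nat l)) (Z.to_nat (Q - P))
          - th * (f y - f x)) <= tau).
Proof.
  intros Hth Hax Hxy Hyb Htau. pose proof bound_nonneg.
  assert (Hth' : 0 <= th <= 1) by (destruct Hth; subst; lra).
  pose proof (Rmin_l 1 (tau / (4 * (b - a + 4)))) as Heps1.
  pose proof (Rmin_r 1 (tau / (4 * (b - a + 4)))) as Heps2.
  set (eps := Rmin 1 (tau / (4 * (b - a + 4)))) in *.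
  assert (Heps : 0 < eps) by (apply Rmin_glb_lt; [lra|apply Rdiv_lt_0_compat; lra]).
  assert (Heps3 : eps * (b - a + 4) <= tau / 4).
  { apply Rle_trans with (tau / (4 * (b - a + 4)) * (b - a + 4));
      [apply Rmult_le_compat_r; lra|right; field; lra]. }
  destruct (tail_bound_small (2 * (B + 1)) C (tau / 4)) as [M [HM HMtail]]; [lra|lra|lra|].
  pose proof (pos_INR M).
  assert (Hev : eventually (fun n => Kant_err_le s a b f n (eps / INR n) /\
    (forall P, Rabs (IZR P - INR n * x) <= 2 ->
       Rabs (boundary_term s a b n f th P - th * f x) <= tau / 4) /\
    (forall Q, Rabs (IZR Q - INR n * y) <= 2 ->
       Rabs (boundary_term s a b n f th Q - th * f y) <= tau / 4) /\
    1 <= INR n /\ INR M + 4 <= INR n * (x - a) /\ INR M + 4 <= INR n * (b - y) /\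
    4 <= INR n * (y - x))).
  { repeat apply filter_and.
    - now apply Kant_rate.
    - apply boundary_term_near; auto; lra.
    - apply boundary_term_near; auto; lra.
    - apply eventually_INR_ge.
    - apply eventually_mul_ge; lra.
    - apply eventually_mul_ge; lra.
    - apply eventually_mul_ge; lra. }
  refine (filter_imp _ _ _ Hev). clear Hev.
  intros n [Herr [HEx [HEy [Hn [Hxa [Hby Hyx]]]]]] P Q HP HQ.
  specialize (HEx P HP). specialize (HEy Q HQ). apply Rabs_le_between' in HP, HQ.
  assert (HPlo : (kmin a n + Z.of_nat M <= P)%Z) by (apply (kmin_add_le a n x); lra).
  assert (HQhi : (Q + Z.of_nat M < kmax b n)%Z) by (apply (add_lt_kmax b n y); lra).
  assert (HPQ : (P <= Q)%Z) by (apply le_IZR; lra).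
  assert (Hd : eps / INR n <= 1)
    by (apply Rmult_le_reg_r with (INR n); [lra|]; field_simplify; nra).
  eapply Rle_trans; [apply (riemann_sum_defect n th (eps / INR n)); auto; lia|].
  assert (Hsteps : INR (Z.to_nat (Q - P)) * (eps / INR n) <= tau / 4).
  { rewrite IZR_Z_to_nat, minus_IZR by lia.
    apply Rle_trans with (eps * (b - a + 4)); [|easy].
    replace ((IZR Q - IZR P) * (eps / INR n)) with (eps * ((IZR Q - IZR P) / INR n))
      by (field; lra).
    apply Rmult_le_compat_l; [lra|].
    apply Rmult_le_reg_r with (INR n); [lra|]. field_simplify; nra. }
  pose proof (tail_bound_antimono C M (Z.to_nat (P - kmin a n)) ltac:(lra) HM ltac:(lia)).
  pose proof (tail_bound_antimono C M (Z.to_nat (kmax b n - Q)) ltac:(lra) HM ltac:(lia)).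
  nra.
Qed.

Lemma f_eq_interior x y : a < x -> x < y -> y < b -> f x = f y.
Proof.
  intros Hax Hxy Hyb. apply Req_le_aux. intros [tau Htau]. simpl.
  pose proof (riemann_sum_near_cells 0 x y (tau / 6) (or_introl eq_refl)
    Hax Hxy Hyb ltac:(lra)) as Hint.
  pose proof (riemann_sum_near_cells (/ 2) x y (tau / 6) (or_intror eq_refl)
    Hax Hxy Hyb ltac:(lra)) as Hhalf.
  destruct (filter_and (F := eventually) _ _ Hint
    (filter_and (F := eventually) _ _ (eventually_double _ Hint)
    (filter_and (F := eventually) _ _ Hhalf
    (filter_and (F := eventually) _ _ (eventually_mul_ge 2 (x - a) ltac:(lra))
                                      (eventually_mul_ge 2 (b - y) ltac:(lra))))))
    as [n Hn].
  destruct (Hn n (le_n n)) as [Hn1 [H2n [Hnh [Hxa Hby]]]]. clear Hn.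
  assert (Hn0 : 0 < INR n) by (pose proof (pos_INR n); nra).
  set (P := Rfloor (INR n * x)). set (Q := Rfloor (INR n * y)).
  pose proof (Rfloor_spec (INR n * x)) as HPx. pose proof (Rfloor_spec (INR n * y)) as HQy.
  fold P in HPx. fold Q in HQy.
  pose proof (Rceil_spec (INR n * a)) as Hlo. pose proof (Rfloor_spec (INR n * b)) as Hhi.
  fold (kmin a n) in Hlo. fold (kmax b n) in Hhi.
  assert (HPQ : (P <= Q)%Z) by (apply Z.lt_succ_r, lt_IZR; rewrite succ_IZR; nra).
  assert (HPlo : (kmin a n <= P)%Z) by (apply le_IZR; lra).
  assert (HQhi : (Q <= kmax b n)%Z) by (apply le_IZR; lra).
  set (J := Z.to_nat (Q - P)).
  assert (H2n0 : INR (2 * n) = 2 * INR n) by (rewrite mult_INR; simpl; ring).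
  specialize (Hn1 P Q ltac:(apply Rabs_le_between'; lra) ltac:(apply Rabs_le_between'; lra)).
  specialize (Hnh P Q ltac:(apply Rabs_le_between'; lra) ltac:(apply Rabs_le_between'; lra)).
  specialize (H2n (2 * P)%Z (2 * Q)%Z).
  rewrite H2n0, !mult_IZR in H2n.
  specialize (H2n ltac:(apply Rabs_le_between'; lra) ltac:(apply Rabs_le_between'; lra)).
  replace (Z.to_nat (2 * Q - 2 * P)) with (2 * J)%nat in H2n by (unfold J; lia).
  rewrite <- H2n0, <- (mult_IZR 2 P), sample_sum_double, (cell_sum_double a b f) in H2n
    by (auto; unfold J; lia).
  fold J in Hn1, Hnh.
  apply Rabs_le_between in Hn1, Hnh, H2n. apply Rabs_le. lra.
Qed.

Lemma const_of_Kant_rate : exists c, forall x, a <= x <= b -> f x = c.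
Proof.
  exists (f ((a + b) / 2)). apply (continuous_on_ab_const_of_interior a b f); auto.
  intros x Hx. destruct (Rtotal_order x ((a + b) / 2)) as [Hlt|[->|Hgt]];
    [apply f_eq_interior; lra|reflexivity|symmetry; apply f_eq_interior; lra].
Qed.

End Sigmoid.



Theorem theorem6p1 (sigma : R -> R) (a b : R) (f : R -> R) :
  a < b ->
  sigmoidal sigma -> Sigma1 sigma -> Sigma2 sigma ->
  (exists alpha, 2 < alpha /\ Sigma3_with sigma alpha) ->
  sigma 1 < 1 ->
  continuous_on_ab f a b ->
  ((* || K_n(f,.) - f ||_inf = o(1/n) *)
   (forall eps, 0 < eps -> exists N : nat, forall n : nat, (N <= n)%nat ->
      forall x, a <= x <= b ->
        Rabs (Kant sigma a b n f x - f x) <= eps / INR n)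
   <->
   (exists c, forall x, a <= x <= b -> f x = c)).
Proof.
  intros Hab [Hmono [Hlim0 Hlim1]] Hsym [_ [_ [_ Hconc]]] [alpha [Halpha Hsig3]] Hs1 Hf.
  split.
  - intros Hrate.
    destruct (Sigma3_quadratic_decay sigma alpha (sigma_le1 sigma Hmono Hlim0 Hsym))
      as [C [HC Hdecay]]; [lra|easy|].
    destruct (continuous_on_ab_bounded a b f Hab Hf) as [B HB].
    exact (const_of_Kant_rate sigma Hmono Hlim0 Hlim1 Hsym Hconc Hs1 C HC Hdecay
             a b f Hab Hf B HB Hrate).
  - intros [c Hc]. exact (Kant_rate_of_const sigma Hmono Hlim1 Hsym Hconc Hs1 a b f c Hab Hc).
Qed.
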